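(* In the unknown-network setting, both the random dictatorship mechanism $g^{R}$ and the duples mechanism $g^{D}$ are valid and DSIC.
   Context: Let $V=\{1,\dots,n\}$, $n\ge2$. A relationship network assigns to every unordered pair of distinct agents one of the symmetric relations friends, enemies, impartial. Preferences: fix $w_f,w_e>0$; an agent $i$ with friend set $F$ and enemy set $E$ ranks $p,p'\in[0,1]^V$ by $p\succ p'$ iff $p_i>p'_i$, or $p_i=p'_i$ and $w_f\sum_{j\in F}(p_j-p'_j)-w_e\sum_{j\in E}(p_j-p'_j)>0$; $p\succsim p'$ means not $p'\succ p$. Unknown-network setting: agent $i$'s type set $\Theta_i$ is the set of triples $m_i=(N_i,F_i,E_i)$ with $N_i\subseteq V$ and $F_i,E_i$ disjoint subsets of $V\setminus\{i\}$; set $I_i=V\setminus(\{i\}\cup F_i\cup E_i)$. A mechanism $g:\prod_i\Theta_i\to[0,1]^V$ is valid if $\sum_ig_i(\mathbf m)\le1$ always, and DSIC if for all $i$, $\mathbf m$, $m'_i$: $g(\mathbf m)\succsim_{m_i}g(m'_i,\mathbf m_{-i})$, where $\succsim_{m_i}$ is the preference of $i$ with the friend and enemy sets in $m_i$. Random dictatorship: for agent $j$ define the choice set $C_j(\mathbf m)$ as: if $F_j\ne\varnothing$, $C_j=F_j\cap N_j$ if this is nonempty, else $C_j=F_j$; if $F_j=\varnothing\ne I_j$, $C_j=I_j\cap N_j$ if nonempty, else $C_j=I_j$; if $F_j=I_j=\varnothing$, $C_j=E_j\cap N_j$ if nonempty, else $C_j=E_j$. Let $g^R_{i|j}(\mathbf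 m)=1/|C_j(\mathbf m)|$ if $i\in C_j(\mathbf m)$ and $0$ otherwise, and $g^R_i(\mathbf m)=\frac1n\sum_{j\in V\setminus\{i\}}g^R_{i|j}(\mathbf m)$. Duples: for an agent $l$ and $j\in V\setminus\{l\}$ let $\mathrm{lev}_l(j)=1,2,3,4,5,6$ according as $j\in F_l\cap N_l$, $F_l\setminus N_l$, $I_l\cap N_l$, $I_l\setminus N_l$, $E_l\cap N_l$, $E_l\setminus N_l$ (using $l$'s report). For distinct $j,k$, agent $l\notin\{j,k\}$ votes for $j$ against $k$ if $\mathrm{lev}_l(j)<\mathrm{lev}_l(k)$ (and abstains if equal). Let $x_{jk}(\mathbf m)$ be the number of agents voting for $j$ against $k$. Set $g^D_j(\{j,k\},\mathbf m)=1,\tfrac12,0$ according as $x_{jk}>x_{kj}$, $x_{jk}=x_{kj}$, $x_{jk}<x_{kj}$, and $g^D_k(\{j,k\},\mathbf m)=1-g^D_j(\{j,k\},\mathbf m)$. Then $g^D_i(\mathbf m)=\frac{2}{n(n-1)}\sum_{j\in V\setminus\{i\}}g^D_i(\{i,j\},\mathbf m)$. *)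

From mathcomp Require Import all_boot all_order all_algebra.
Set Implicit Arguments. Unset Strict Implicit. Unset Printing Implicit Defensive.
Import Order.TTheory GRing.Theory Num.Theory.
Local Open Scope ring_scope.

Section Defs.
Variable n : nat.
Notation agent := 'I_n.

Definition report := ({set agent} * {set agent} * {set agent})%type.
Definition rN (m : report) : {set agent} := m.1.1.
Definition rF (m : report) : {set agent} := m.1.2.
Definition rE (m : report) : {set agent} := m.2.
Definition rI (i : agent) (m : report) : {set agent} := ~: (i |: (rF m :|: rE m)).

Definition in_type (i : agent) (m : report) : bool :=
  [disjoint rF m & rE m] && (i \notin rF m) && (i \notin rE m).

Definition profile := agent -> report.
Definition valid_profile (m : profile) : Prop := forall i, in_type i (m i).

Definition deviate (m : profile) (i : agent) (mi' : report) : profile :=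
  fun j => if j == i then mi' else m j.

Variable R : realFieldType.
Definition outcome := agent -> R.
Definition mechanism := profile -> outcome.

Definition spref (wf we : R) (i : agent) (F E : {set agent}) (p p' : outcome) : bool :=
  (p' i < p i) ||
  ((p i == p' i) &&
   (0 < wf * (\sum_(j in F) (p j - p' j)) - we * (\sum_(j in E) (p j - p' j)))).
Definition wpref (wf we : R) i F E (p p' : outcome) : bool := ~~ spref wf we i F E p' p.

Definition valid_mech (g : mechanism) : Prop :=
  forall m : profile, valid_profile m ->
    (forall i, 0 <= g m i <= 1) /\ \sum_i g m i <= 1.

Definition DSIC (wf we : R) (g : mechanism) : Prop :=
  forall (m : profile) (i : agent) (mi' : report),
    valid_profile m -> in_type i mi' ->
    wpref wf we i (rF (m i)) (rE (m i)) (g m) (g (deviate m i mi')).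

Definition restrictN (A N : {set agent}) : {set agent} :=
  if A :&: N != set0 then A :&: N else A.

Definition choice_set (m : profile) (j : agent) : {set agent} :=
  let mj := m j in
  if rF mj != set0 then restrictN (rF mj) (rN mj)
  else if rI j mj != set0 then restrictN (rI j mj) (rN mj)
  else restrictN (rE mj) (rN mj).

Definition gR_cond (m : profile) (i j : agent) : R :=
  if i \in choice_set m j then (#|choice_set m j|%:R)^-1 else 0.

Definition gR : mechanism := fun m i =>
  (n%:R)^-1 * \sum_(j | j != i) gR_cond m i j.

Definition lev (l : agent) (ml : report) (j : agent) : nat :=
  if j \in rF ml then (if j \in rN ml then 1 else 2)%N
  else if j \in rI l ml then (if j \in rN ml then 3 else 4)%N
  else if j \in rE ml then (if j \in rN ml then 5 else 6)%N
  else 0%N. (* unreachable for j != l and a report in Theta_l *)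

Definition votes (m : profile) (j k : agent) : nat :=
  #|[set l : agent | (l != j) && (l != k) && (lev l (m l) j < lev l (m l) k)%N]|.

Definition gD_pair (m : profile) (j k : agent) : R :=
  if (votes m k j < votes m j k)%N then 1
  else if votes m j k == votes m k j then 2^-1 else 0.

Definition gD : mechanism := fun m i =>
  2 / (n%:R * (n.-1)%:R) * \sum_(j | j != i) gD_pair m i j.

End Defs.

(* Changing agent i's report touches only the lottery that i would run as
   dictator (in g^R) and i's own votes (in g^D); i's own share is unaffected.
   Under g^R, truthful i hands its whole lottery to friends when it has any, and
   never to an enemy when it has a friend or an impartial agent; otherwise all
   other agents are enemies and every report gives them the whole lottery. Under
   g^D, the net change of the shares of a set A of agents is the net change of
   the duels between A and its complement, since duels inside A cancel; truthful
   i already votes for every friend against every non-friend, and for every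
   non-enemy against every enemy, so a lie can only hurt friends and help
   enemies. Validity holds because each dictator distributes mass at most 1 and
   each of the n(n-1)/2 duels distributes mass exactly 1. *)
From mathcomp Require Import all_boot all_order all_algebra.
From mathcomp Require Import lra zify.
Import Order.TTheory GRing.Theory Num.Theory.
Local Open Scope ring_scope.

Lemma sum_le1_bounds (R : numDomainType) (I : finType) (g : I -> R) :
  (forall i, 0 <= g i) -> \sum_i g i <= 1 -> forall i, 0 <= g i <= 1.
Proof.
move=> g_ge0 sum_le1 i; rewrite g_ge0 /=; apply: le_trans sum_le1.
by rewrite (bigD1 i) //= lerDl sumr_ge0.
Qed.

Lemma sum_antisym_sub (R : numDomainType) (I : finType) (A : {pred I})
    (D : I -> I -> R) :
  (forall j k, D j k = - D k j) -> \sum_(j in A) \sum_(k in A) D j k = 0.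
Proof.
move=> D_antisym; set S := LHS.
have SN : S = - S.
  rewrite {1}/S exchange_big -sumrN; apply: eq_bigr => k _; rewrite -sumrN.
  by apply: eq_bigr => j _; rewrite D_antisym.
suff : S *+ 2 == 0 by rewrite mulrn_eq0 => /eqP.
by rewrite mulr2n {1}SN addNr.
Qed.

Lemma wpref_own_share (R : realFieldType) n (wf we : R) (i : 'I_n)
    (F E : {set 'I_n}) (p p' : outcome n R) :
  0 <= wf -> 0 <= we -> p' i = p i ->
  \sum_(j in F) (p' j - p j) <= 0 -> 0 <= \sum_(j in E) (p' j - p j) ->
  wpref wf we i F E p p'.
Proof.
move=> wf_ge0 we_ge0 own friends enemies.
rewrite /wpref /spref own ltxx eqxx /= -leNgt subr_le0.
apply: le_trans (mulr_ge0 we_ge0 enemies).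
by rewrite mulr_ge0_le0.
Qed.

Section Deviation.
Variables (n : nat) (m : profile n) (i : 'I_n) (mi' : report n).

Lemma deviate_self : deviate m i mi' i = mi'.
Proof. by rewrite /deviate eqxx. Qed.

Lemma deviate_other j : j != i -> deviate m i mi' j = m j.
Proof. by move=> ji; rewrite /deviate (negbTE ji). Qed.

End Deviation.

Section RandomDictatorship.
Variables (R : realFieldType) (n : nat).
Implicit Types (m : profile n) (A N : {set 'I_n}) (P : pred 'I_n).

Lemma mem_restrictN A N x : x \in restrictN A N -> x \in A.
Proof. by rewrite /restrictN; case: ifP => // _; rewrite inE => /andP[]. Qed.

Lemma restrictN_neq0 A N : A != set0 -> restrictN A N != set0.
Proof. by rewrite /restrictN; case: ifP. Qed.

Lemma exists_neq (l : 'I_n) : (1 < n)%N -> exists k : 'I_n, k != l.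
Proof.
move=> n_gt1; have [k kl] : exists k : 'I_n, val k != val l.
  by case: (eqVneq (val l) 0%N) => l0;
    [exists (Ordinal n_gt1) | exists (Ordinal (ltn_trans (ltnSn 0) n_gt1))];
    rewrite /= ?l0 // eq_sym.
by exists k; apply: contra kl => /eqP ->.
Qed.

Lemma choice_set_neq0 m l : (1 < n)%N -> choice_set m l != set0.
Proof.
move=> n_gt1; rewrite /choice_set.
case: ifP => [F_neq0|/negbFE/eqP F0]; first exact: restrictN_neq0.
case: ifP => [I_neq0|/negbFE/eqP I0]; first exact: restrictN_neq0.
apply/restrictN_neq0/set0Pn; have [k kl] := exists_neq l n_gt1; exists k.
have : k \notin rI l (m l) by rewrite I0 inE.
by rewrite /rI !inE (negbTE kl) F0 inE /= negbK.
Qed.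

Lemma choice_set_self m l : in_type l (m l) -> l \notin choice_set m l.
Proof.
case/andP=> /andP[_ lF] lE; rewrite /choice_set.
case: ifP => _; first by apply: contra lF => /mem_restrictN.
case: ifP => _; first by apply/negP => /mem_restrictN; rewrite !inE eqxx.
by apply: contra lE => /mem_restrictN.
Qed.

Lemma choice_set_deviate m i mi' j :
  j != i -> choice_set (deviate m i mi') j = choice_set m j.
Proof. by move=> ji; rewrite /choice_set deviate_other. Qed.

Lemma sum_gR_cond m P l :
  \sum_(j | P j) gR_cond R m j l =
  #|[predI P & choice_set m l]|%:R / #|choice_set m l|%:R.
Proof. by rewrite /gR_cond -big_mkcondr sumr_const mulr_natl. Qed.

Lemma gR_cond_ge0 m j l : 0 <= gR_cond R m j l.
Proof. by rewrite /gR_cond; case: ifP; rewrite ?invr_ge0. Qed.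

Lemma sum_gR_cond_le1 m P l : \sum_(j | P j) gR_cond R m j l <= 1.
Proof.
rewrite sum_gR_cond; have [->|cs_gt0] := posnP #|choice_set m l|.
  by rewrite invr0 mulr0.
rewrite ler_pdivrMr ?ltr0n // mul1r ler_nat subset_leq_card //.
by apply/subsetP => j /andP[].
Qed.

Lemma sum_gR_cond_eq1 m P l :
  choice_set m l != set0 -> {subset choice_set m l <= P} ->
  \sum_(j | P j) gR_cond R m j l = 1.
Proof.
move=> cs_neq0 cs_sub; rewrite sum_gR_cond.
have -> : #|[predI P & choice_set m l]| = #|choice_set m l|.
  apply: eq_card => j /=; apply/andP/idP => [[]//|cs_j].
  by split=> //; apply: cs_sub.
by rewrite divff // pnatr_eq0 -lt0n card_gt0.
Qed.

Lemma sum_gR_cond_eq0 m P l :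
  {in choice_set m l, forall j, ~~ P j} -> \sum_(j | P j) gR_cond R m j l = 0.
Proof.
move=> cs_notP; rewrite sum_gR_cond.
have -> : #|[predI P & choice_set m l]| = 0%N.
  apply: eq_card0 => j; apply/negbTE/negP; rewrite inE.
  by move=> /andP[Pj /cs_notP/negP notP]; exact: notP Pj.
exact: mul0r.
Qed.

Lemma gR_valid : (1 < n)%N -> valid_mech (@gR n R).
Proof.
move=> n_gt1 m _; have n_gt0 : (0 < n)%N by apply: ltn_trans n_gt1.
have gR_ge0 i : 0 <= gR R m i.
  by rewrite /gR mulr_ge0 ?invr_ge0 // sumr_ge0 // => j _; apply: gR_cond_ge0.
suff sum_le1 : \sum_i gR R m i <= 1 by split=> //; apply: sum_le1_bounds.
rewrite /gR -mulr_sumr (exchange_big_dep predT) //= ler_pdivrMl ?ltr0n //.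
rewrite mulr1 -[in X in _ <= X](card_ord n) -sumr_const.
by rewrite ler_sum // => l _; apply: sum_gR_cond_le1.
Qed.

Lemma gR_deviate_self m i mi' : gR R (deviate m i mi') i = gR R m i.
Proof.
rewrite /gR; congr (_ * _); apply: eq_bigr => j ji.
by rewrite /gR_cond choice_set_deviate.
Qed.

Lemma sum_gR_deviate m i mi' (A : {set 'I_n}) : i \notin A ->
  \sum_(j in A) (gR R (deviate m i mi') j - gR R m j) =
  n%:R^-1 * (\sum_(j in A) gR_cond R (deviate m i mi') j i -
             \sum_(j in A) gR_cond R m j i).
Proof.
move=> iA; rewrite -sumrB mulr_sumr; apply: eq_bigr => j jA.
rewrite /gR -mulrBr -sumrB (bigD1 i) 1?eq_sym ?(memPn iA) //= big1 ?addr0 //.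
by move=> l /andP[_ li]; rewrite /gR_cond choice_set_deviate // subrr.
Qed.

Lemma sum_gR_cond_friends m m' i :
  \sum_(j in rF (m i)) gR_cond R m' j i <= \sum_(j in rF (m i)) gR_cond R m j i.
Proof.
have [->|F_neq0] := eqVneq (rF (m i)) set0; first by rewrite !big_set0.
rewrite [leRHS]sum_gR_cond_eq1 ?sum_gR_cond_le1 // /choice_set F_neq0.
  exact: restrictN_neq0.
by move=> j /mem_restrictN.
Qed.

Lemma sum_gR_cond_enemies m m' i : (1 < n)%N ->
  in_type i (m i) -> in_type i (m' i) ->
  \sum_(j in rE (m i)) gR_cond R m j i <= \sum_(j in rE (m i)) gR_cond R m' j i.
Proof.
move=> n_gt1 /andP[/andP[FE _] _] type_m'.
have no_enemy_chosen : {in choice_set m i, forall j, j \notin rE (m i)} ->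
    \sum_(j in rE (m i)) gR_cond R m j i <=
    \sum_(j in rE (m i)) gR_cond R m' j i.
  move=> cs_notE; rewrite sum_gR_cond_eq0 // sumr_ge0 // => j _.
  exact: gR_cond_ge0.
have [F0|F_neq0] := eqVneq (rF (m i)) set0; last first.
  apply: no_enemy_chosen => j; rewrite /choice_set F_neq0 => /mem_restrictN jF.
  by rewrite (disjointFr FE jF).
have [I0|I_neq0] := eqVneq (rI i (m i)) set0; last first.
  apply: no_enemy_chosen => j.
  rewrite /choice_set F0 eqxx I_neq0 => /mem_restrictN.
  by rewrite !inE negb_or => /andP[_]; rewrite negb_or => /andP[].
rewrite [leRHS]sum_gR_cond_eq1 ?sum_gR_cond_le1 ?choice_set_neq0 // => j cs_j.
have ji : j != i by apply: contraTneq cs_j => ->; apply: choice_set_self.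
have : j \notin rI i (m i) by rewrite I0 inE.
by rewrite !inE (negbTE ji) F0 inE /= negbK.
Qed.

Lemma gR_DSIC (wf we : R) :
  (1 < n)%N -> 0 <= wf -> 0 <= we -> DSIC wf we (@gR n R).
Proof.
move=> n_gt1 wf_ge0 we_ge0 m i mi' valid_m type_mi'.
have [iF iE] : i \notin rF (m i) /\ i \notin rE (m i).
  by case/andP: (valid_m i) => /andP[_ ->] ->.
have type_m' : in_type i (deviate m i mi' i) by rewrite deviate_self.
have n_inv_ge0 : 0 <= (n%:R : R)^-1 by rewrite invr_ge0.
apply: wpref_own_share wf_ge0 we_ge0 _ _ _;
  rewrite ?gR_deviate_self ?sum_gR_deviate //.
  by rewrite mulr_ge0_le0 // subr_le0 sum_gR_cond_friends.
by rewrite mulr_ge0 // subr_ge0 sum_gR_cond_enemies.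
Qed.

End RandomDictatorship.

Section Duples.
Variables (R : realFieldType) (n : nat).
Implicit Types (m : profile n) (x y : nat).

Definition duel_score x y : R :=
  if (y < x)%N then 1 else if x == y then 2^-1 else 0.

Lemma gD_pairE m j k : gD_pair R m j k = duel_score (votes m j k) (votes m k j).
Proof. by []. Qed.

Lemma duel_score_swap x y : duel_score x y + duel_score y x = 1.
Proof.
by rewrite /duel_score; case: ltngtP; rewrite ?add0r ?addr0 // => _; lra.
Qed.

Lemma duel_score_ge0 x y : 0 <= duel_score x y.
Proof.
by rewrite /duel_score; case: ifP => // _; case: ifP; rewrite ?invr_ge0.
Qed.

Lemma le_duel_score x y x' y' :
  (x' <= x)%N -> (y <= y')%N -> duel_score x' y' <= duel_score x y.
Proof.
move=> le_x le_y; rewrite /duel_score.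
case: ifP => [lt_y'x'|_]; first by rewrite ifT //; lia.
case: ifP => [/eqP eq_x'y'|_]; last exact: duel_score_ge0.
case: ifP => [_|not_lt_yx]; first lra.
by rewrite ifT //; apply/eqP; lia.
Qed.

Lemma gD_pair_swap m j k : gD_pair R m j k + gD_pair R m k j = 1.
Proof. exact: duel_score_swap. Qed.

Lemma gD_pair_ge0 m j k : 0 <= gD_pair R m j k.
Proof. exact: duel_score_ge0. Qed.

Lemma sum_gD_pair m :
  (\sum_j \sum_(k | k != j) gD_pair R m j k) *+ 2 = (n * n.-1)%:R.
Proof.
rewrite mulr2n [X in _ + X](exchange_big_dep predT) //= -big_split /=.
rewrite (eq_bigr (fun _ => (n.-1)%:R)) => [|j _].
  by rewrite sumr_const card_ord natrM mulr_natl.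
under [X in _ + X]eq_bigl do rewrite eq_sym.
rewrite -big_split /= (eq_bigr (fun _ => 1)) => [|k _].
  by rewrite sumr_const cardC1 card_ord.
exact: gD_pair_swap.
Qed.

Lemma gD_valid : (1 < n)%N -> valid_mech (@gD n R).
Proof.
move=> n_gt1 m _.
have gD_ge0 i : 0 <= gD R m i.
  rewrite /gD mulr_ge0 ?divr_ge0 ?mulr_ge0 // sumr_ge0 // => j _.
  exact: gD_pair_ge0.
suff sum_le1 : \sum_i gD R m i <= 1 by split=> //; apply: sum_le1_bounds.
rewrite /gD -mulr_sumr -natrM mulrC mulrA mulr_natr sum_gD_pair divff //.
by rewrite pnatr_eq0 muln_eq0 negb_or; apply/andP; split; apply/eqP; lia.
Qed.

Lemma sum_gD_diff_cut m m' (A : {set 'I_n}) :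
  \sum_(j in A) (gD R m' j - gD R m j) =
  2 / (n%:R * (n.-1)%:R) *
  \sum_(j in A) \sum_(k | k \notin A) (gD_pair R m' j k - gD_pair R m j k).
Proof.
set D := fun j k => gD_pair R m' j k - gD_pair R m j k.
have D_antisym j k : D j k = - D k j.
  by rewrite /D; have := gD_pair_swap m' j k; have := gD_pair_swap m j k; lra.
have gD_diff j : gD R m' j - gD R m j = 2 / (n%:R * (n.-1)%:R) * \sum_k D j k.
  have D_jj : D j j = 0 by have := D_antisym j j; lra.
  by rewrite /gD -mulrBr -sumrB [in RHS](bigD1 j) //= D_jj add0r.
rewrite (eq_bigr _ (fun j _ => gD_diff j)) -mulr_sumr; congr (_ * _).
under eq_bigr do rewrite (bigID (mem A)) /=.
by rewrite big_split /= sum_antisym_sub // add0r.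
Qed.

Lemma lev_friend_lt (l : 'I_n) ml j k :
  j \in rF ml -> k \notin rF ml -> k != l -> (lev l ml j < lev l ml k)%N.
Proof.
move=> jF kF kl.
have le2 : (lev l ml j <= 2)%N by rewrite /lev jF; case: ifP.
have ge3 : (3 <= lev l ml k)%N.
  rewrite /lev (negbTE kF) !inE (negbTE kl) (negbTE kF) /=.
  by case: (k \in rE ml); case: (k \in rN ml).
by apply: leq_ltn_trans le2 _.
Qed.

Lemma lev_enemy_gt (l : 'I_n) ml j k : in_type l ml ->
  j \in rE ml -> k \notin rE ml -> k != l -> (lev l ml k < lev l ml j)%N.
Proof.
case/andP=> /andP[FE _] _ jE kE kl.
have ge5 : (5 <= lev l ml j)%N.
  by rewrite /lev (disjointFl FE jE) !inE jE !orbT /=; case: ifP.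
have le4 : (lev l ml k <= 4)%N.
  rewrite /lev !inE (negbTE kl) (negbTE kE) orbF /=.
  by case: (k \in rF ml); case: (k \in rN ml).
by apply: leq_ltn_trans le4 _.
Qed.

Lemma votes_le_agree m m' i j k : (forall l, l != i -> m' l = m l) ->
  (i != j -> i != k -> (lev i (m' i) j < lev i (m' i) k)%N ->
                       (lev i (m i) j < lev i (m i) k)%N) ->
  (votes m' j k <= votes m j k)%N.
Proof.
move=> agree i_vote; apply: subset_leq_card; apply/subsetP => l; rewrite !inE.
case/andP=> /andP[lj lk] vote_l; rewrite lj lk /=.
by case: (eqVneq l i) => [eq_li|li]; [subst l; apply: i_vote | rewrite -agree].
Qed.

Lemma votes_agree m m' i j k : (forall l, l != i -> m' l = m l) ->
  (i == j) || (i == k) -> votes m' j k = votes m j k.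
Proof.
move=> agree i_jk; have agree' l : l != i -> m l = m' l by move/agree.
apply/eqP; rewrite eqn_leq; apply/andP; split;
  [apply: votes_le_agree agree _ | apply: votes_le_agree agree' _] => ij ik;
  by rewrite (negbTE ij) (negbTE ik) in i_jk.
Qed.

Lemma gD_pair_truthful_le m m' i j k : (forall l, l != i -> m' l = m l) ->
  (i != j -> i != k -> (lev i (m i) j < lev i (m i) k)%N) ->
  gD_pair R m' j k <= gD_pair R m j k.
Proof.
move=> agree truthful; have agree' l : l != i -> m l = m' l by move/agree.
rewrite !gD_pairE le_duel_score //.
  by apply: votes_le_agree agree _ => ij ik _; apply: truthful.
apply: votes_le_agree agree' _ => ik ij; have := truthful ij ik; lia.
Qed.

Lemma gD_deviate_self m i mi' : gD R (deviate m i mi') i = gD R m i.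
Proof.
rewrite /gD; congr (_ * _); apply: eq_bigr => k _.
have agree l : l != i -> deviate m i mi' l = m l by apply: deviate_other.
rewrite !gD_pairE; congr duel_score; apply: votes_agree agree _.
  by rewrite eqxx.
by rewrite eqxx orbT.
Qed.

Lemma gD_DSIC (wf we : R) : 0 <= wf -> 0 <= we -> DSIC wf we (@gD n R).
Proof.
move=> wf_ge0 we_ge0 m i mi' valid_m _; set m' := deviate m i mi'.
have agree l : l != i -> m' l = m l by apply: deviate_other.
have c_ge0 : 0 <= 2 / (n%:R * (n.-1)%:R) :> R by rewrite divr_ge0 ?mulr_ge0.
apply: wpref_own_share wf_ge0 we_ge0 (gD_deviate_self _ _ _) _ _;
  rewrite sum_gD_diff_cut.
  rewrite mulr_ge0_le0 // sumr_le0 // => j jF; rewrite sumr_le0 // => k kF.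
  rewrite subr_le0; apply: gD_pair_truthful_le agree _ => _ ik.
  by apply: lev_friend_lt; rewrite // eq_sym.
rewrite mulr_ge0 // sumr_ge0 // => j jE; rewrite sumr_ge0 // => k kE.
have : gD_pair R m' k j <= gD_pair R m k j.
  apply: gD_pair_truthful_le agree _ => ik _.
  by apply: lev_enemy_gt; rewrite // eq_sym.
by have := gD_pair_swap m' j k; have := gD_pair_swap m j k; lra.
Qed.

End Duples.

Theorem proposition1 (R : realFieldType) (n : nat) (wf we : R) :
  (1 < n)%N -> 0 < wf -> 0 < we ->
  [/\ valid_mech (@gR n R), DSIC wf we (@gR n R),
      valid_mech (@gD n R) & DSIC wf we (@gD n R)].
Proof.
move=> n_gt1 /ltW wf_ge0 /ltW we_ge0; split.
- exact: gR_valid.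
- exact: gR_DSIC.
- exact: gD_valid.
- exact: gD_DSIC.
Qed.
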